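(* Let $\mathbb{F}$ be an algebraically closed field with $\mathrm{Char}(\mathbb{F})\ne2$, and let $s,t,z\in\mathbb{F}$ be nonzero with $s^2\neq1$, $t^2\ne1$, $s+t\neq0$, $z\neq1$. Put $\tilde y_1=tz+\frac{1-t^2}{s+t}$ and $\tilde y_2=-sz+\frac{1+st}{s+t}$. Then the pair $A=\begin{pmatrix}0&z&0\\1&0&1-z\\0&1&0\end{pmatrix}$, $A^*=\begin{pmatrix}0&\tilde y_1&0\\ s&0&\tilde y_2\\0&t&0\end{pmatrix}$ is a Leonard pair in $\mathrm{Mat}_3(\mathbb{F})$, and it has a parameter array with $\theta_0=1,\theta_1=0,\theta_2=-1$, $\theta^*_0=1,\theta^*_1=0,\theta^*_2=-1$, $\varphi_1=\varphi_2=\frac{(s-1)(t-1)}{s+t}$, $\phi_1=\phi_2=\frac{(s+1)(t+1)}{s+t}$.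
   Context: A Leonard pair in $\mathrm{Mat}_{d+1}(\mathbb{F})$ is a pair of matrices $A,A^*$ such that there is a basis of $\mathbb{F}^{d+1}$ in which $A$ is irreducible tridiagonal (tridiagonal with all sub/superdiagonal entries nonzero) and $A^*$ diagonal, and a basis in which $A^*$ is irreducible tridiagonal and $A$ diagonal. A Leonard system is $(A,\{E_i\}_{i=0}^d,A^*,\{E^*_i\}_{i=0}^d)$ where $A,A^*$ each have $d+1$ distinct eigenvalues, $\{E_i\},\{E^*_i\}$ are orderings of their primitive idempotents, and $E_iA^*E_j,E^*_iAE^*_j$ are $0$ for $|i-j|>1$ and nonzero for $|i-j|=1$. Eigenvalue sequences: $AE_i=\theta_iE_i$, $A^*E^*_i=\theta^*_iE^*_i$. First split sequence: for nonzero $v\in E^*_0V$, $u_i=(A-\theta_{i-1}I)\cdots(A-\theta_0I)v$ form a basis in which $A^*$ is upper bidiagonal with diagonal $\theta^*_0,\dots,\theta^*_d$ and superdiagonal $\varphi_1,\dots,\varphi_d$. Second split sequence $\{\phi_i\}$: first split sequence of $(A,\{E_{d-i}\},A^*,\{E^*_i\})$. Parameter array $(\{\theta_i\},\{\theta^*_i\},\{\varphi_i\},\{\phi_i\})$; a parameter array of a Leonard pair is that of any associated Leonard system. *)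

From HB Require Import structures.
From mathcomp Require Import all_boot all_order all_algebra.
Set Implicit Arguments. Unset Strict Implicit. Unset Printing Implicit Defensive.
Import Order.TTheory GRing.Theory Num.Theory.
Local Open Scope ring_scope.

(* Matrices act on column vectors; a "basis" is given by the columns of an
   invertible matrix P, and the matrix of A in that basis is P^-1 A P. *)

Section Leonard.
Variable F : fieldType.
Variable d : nat.
Local Notation M := 'M[F]_d.+1.

Definition irr_tridiag (B : M) : Prop :=
  forall i j : 'I_d.+1,
    ((i.+1 < j)%N \/ (j.+1 < i)%N -> B i j = 0) /\
    ((i.+1 = j)%N \/ (j.+1 = i)%N -> B i j != 0).

Definition diagonal (B : M) : Prop :=
  forall i j : 'I_d.+1, i != j -> B i j = 0.

Definition leonard_pair (A As : M) : Prop :=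
  (exists P : M, P \in unitmx /\
     irr_tridiag (invmx P *m A *m P) /\ diagonal (invmx P *m As *m P)) /\
  (exists Q : M, Q \in unitmx /\
     irr_tridiag (invmx Q *m As *m Q) /\ diagonal (invmx Q *m A *m Q)).

Definition prim_idems (A : M) (E : nat -> M) (th : nat -> F) : Prop :=
  (forall i j, (i <= d)%N -> (j <= d)%N ->
      E i *m E j = if i == j then E i else 0) /\
  \sum_(i < d.+1) E i = 1%:M /\
  (forall i, (i <= d)%N -> E i != 0 /\ A *m E i = th i *: E i) /\
  (forall i j, (i <= d)%N -> (j <= d)%N -> th i = th j -> i = j).

Definition leonard_system (A : M) (E : nat -> M) (As : M) (Es : nat -> M)
    (th ths : nat -> F) : Prop :=
  prim_idems A E th /\ prim_idems As Es ths /\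
  (forall i j, (i <= d)%N -> (j <= d)%N ->
     ((i.+1 < j)%N \/ (j.+1 < i)%N -> E i *m As *m E j = 0) /\
     ((i.+1 = j)%N \/ (j.+1 = i)%N -> E i *m As *m E j != 0)) /\
  (forall i j, (i <= d)%N -> (j <= d)%N ->
     ((i.+1 < j)%N \/ (j.+1 < i)%N -> Es i *m A *m Es j = 0) /\
     ((i.+1 = j)%N \/ (j.+1 = i)%N -> Es i *m A *m Es j != 0)).

Fixpoint split_vec (A : M) (th : nat -> F) (v : 'cV[F]_d.+1) (i : nat)
  : 'cV[F]_d.+1 :=
  match i with
  | 0 => v
  | i'.+1 => (A - (th i')%:M) *m split_vec A th v i'
  end.

(* phi_1..phi_d is the first split sequence of the Leonard system with
   eigenvalue sequences th, ths and E*_0 = Es0: for every nonzero v in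
   E*_0 V the u_i form a basis in which A* is upper bidiagonal with
   diagonal ths_0..ths_d and superdiagonal phi_1..phi_d. *)
Definition first_split (A As Es0 : M) (th ths phi : nat -> F) : Prop :=
  forall v : 'cV[F]_d.+1, v != 0 -> (exists w, v = Es0 *m w) ->
    let u := split_vec A th v in
    (\matrix_(j < d.+1, i < d.+1) u i j ord0) \in unitmx /\
    (forall i, (i <= d)%N ->
       As *m u i = ths i *: u i +
                   (if i is i'.+1 then phi i *: u i' else 0)).

(* The second split
   sequence is the first split sequence of (A, {E_{d-i}}, A*, {E*_i}),
   whose eigenvalue sequence is th_{d-i}. *)
Definition parameter_array (A As : M) (th ths phi phi' : nat -> F) : Prop :=
  exists (E Es : nat -> M),
    leonard_system A E As Es th ths /\
    first_split A As (Es 0%N) th ths phi /\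
    first_split A As (Es 0%N) (fun i => th (d - i)%N) ths phi'.

End Leonard.

Definition mx3 (F : fieldType) (rows : seq (seq F)) : 'M[F]_3 :=
  \matrix_(i < 3, j < 3) nth 0 (nth [::] rows i) j.

Definition seq3 (F : fieldType) (a b c : F) : nat -> F :=
  fun i => nth 0 [:: a; b; c] i.

From HB Require Import structures.
From mathcomp Require Import all_boot all_order all_algebra.
From mathcomp Require Import ring.
Import Order.TTheory GRing.Theory Num.Theory.
Set Implicit Arguments. Unset Strict Implicit. Unset Printing Implicit Defensive.
Local Open Scope ring_scope.

(* Let P and Q be eigenbases of A* and A.  Both have eigenvalues 1, 0, -1,
   and A in the basis P and A* in the basis Q are the same irreducible
   tridiagonal matrix B = [b0 b1 0; b2 0 -b2; 0 -b1 -b0].  Conjugating the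
   elementary idempotents by Q and P gives the primitive idempotents of a Leonard
   system.  In the basis P the split vectors start from e_0 and are produced by
   B, so they are triangular with nonzero diagonal, hence a basis; the relation
   A* u_i = th*_i u_i + phi_i u_(i-1) then reduces to the identities
   b0 - e = (s - e)(t - e)/(s + t) for e = 1, -1 and b0^2 + 2 b1 b2 = 1. *)

Lemma delta_mx_sandwich (R : comPzRingType) n (M : 'M[R]_n) i j :
  delta_mx i i *m M *m delta_mx j j = M i j *: delta_mx i j.
Proof.
rewrite -(mul_delta_mx (0 : 'I_1) i i) -(mul_delta_mx (0 : 'I_1) j j) !mulmxA.
rewrite -(mulmxA _ _ M) -(mulmxA _ (_ *m M)) -rowE -colE.
by rewrite [col _ _]mx11_scalar !mxE mul_mx_scalar -scalemxAl mul_delta_mx.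
Qed.

Section ConjugatedIdempotents.
Variables (F : fieldType) (d : nat).
Local Notation M := 'M[F]_d.+1.

Lemma invmx_eq (P Pi : M) : Pi *m P = 1%:M -> invmx P = Pi.
Proof.
move=> /mulmx1C PPi; have [Pu _] := mulmx1_unit PPi.
by rewrite -[invmx P]mulmx1 -PPi mulmxA mulVmx // mul1mx.
Qed.

Definition conj_idem (P Pi : M) (i : nat) : M :=
  P *m delta_mx (inord i) (inord i) *m Pi.

Section Basis.
Variables P Pi : M.
Hypothesis PiP : Pi *m P = 1%:M.

Lemma conj_delta_neq0 (i j : 'I_d.+1) : P *m delta_mx i j *m Pi != 0.
Proof.
apply: contraTneq isT => PdPi0.
have : Pi *m (P *m delta_mx i j *m Pi) *m P = delta_mx i j.
  by rewrite !mulmxA PiP mul1mx -mulmxA PiP mulmx1.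
rewrite PdPi0 mulmx0 mul0mx => /matrixP /(_ i j).
by rewrite !mxE !eqxx => /esym/eqP; rewrite oner_eq0.
Qed.

Lemma conj_idem_sandwich (Y : M) i j :
  conj_idem P Pi i *m Y *m conj_idem P Pi j =
  (Pi *m Y *m P) (inord i) (inord j) *: (P *m delta_mx (inord i) (inord j) *m Pi).
Proof.
by rewrite /conj_idem scalemxAl scalemxAr -delta_mx_sandwich !mulmxA.
Qed.

Lemma conj_idemM i j : (i <= d)%N -> (j <= d)%N ->
  conj_idem P Pi i *m conj_idem P Pi j = if i == j then conj_idem P Pi i else 0.
Proof.
move=> i_le j_le; rewrite /conj_idem !mulmxA -(mulmxA _ Pi P) PiP mulmx1.
rewrite -(mulmxA P) mul_delta_mx_cond.
have [<-|neq_ij] := eqVneq i j; first by rewrite eqxx mulr1n.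
suff /negPf-> : (inord i : 'I_d.+1) != inord j by rewrite mulr0n mulmx0 mul0mx.
by apply: contra neq_ij => /eqP/(congr1 val); rewrite /= !inordK // => ->.
Qed.

Lemma sum_conj_idem : \sum_(i < d.+1) conj_idem P Pi i = 1%:M.
Proof.
under eq_bigr do rewrite /conj_idem inord_val.
by rewrite -mulmx_suml -mulmx_sumr -mx1_sum_delta mulmx1 mulmx1C.
Qed.

Lemma prim_idems_conj (X : M) (th : nat -> F) :
  Pi *m X *m P = diag_mx (\row_(i < d.+1) th i) ->
  (forall i j, (i <= d)%N -> (j <= d)%N -> th i = th j -> i = j) ->
  prim_idems X (conj_idem P Pi) th.
Proof.
move=> XD th_inj; split; first exact: conj_idemM.
split; first exact: sum_conj_idem.
split=> // i i_le; split; first exact: conj_delta_neq0.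
have XP : X *m P = P *m diag_mx (\row_(i < d.+1) th i).
  by rewrite -XD !mulmxA (mulmx1C PiP) mul1mx.
have DE : diag_mx (\row_(i < d.+1) th i) *m delta_mx (inord i) (inord i) =
          th i *: delta_mx (inord i) (inord i) :> M.
  apply/matrixP=> a b; rewrite mul_diag_mx !mxE.
  by have [->|] := eqVneq a (inord i); rewrite ?inordK ?mulr0.
by rewrite /conj_idem !mulmxA XP -(mulmxA P) DE scalemxAl scalemxAr.
Qed.

Lemma conj_idem_tridiag (Y : M) : irr_tridiag (Pi *m Y *m P) ->
  forall i j, (i <= d)%N -> (j <= d)%N ->
  ((i.+1 < j)%N \/ (j.+1 < i)%N -> conj_idem P Pi i *m Y *m conj_idem P Pi j = 0) /\
  ((i.+1 = j)%N \/ (j.+1 = i)%N -> conj_idem P Pi i *m Y *m conj_idem P Pi j != 0).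
Proof.
move=> Ytri i j i_le j_le; rewrite conj_idem_sandwich.
have [Y0 Ynz] := Ytri (inord i) (inord j); rewrite !inordK // in Y0 Ynz.
split=> [/Y0->|/Ynz Yij]; first by rewrite scale0r.
by rewrite scaler_eq0 negb_or Yij conj_delta_neq0.
Qed.

End Basis.

Definition split_mx (A : M) (th : nat -> F) (v : 'cV[F]_d.+1) : M :=
  \matrix_(j < d.+1, i < d.+1) split_vec A th v i j ord0.

Lemma split_vecZ (A : M) th (k : F) v i :
  split_vec A th (k *: v) i = k *: split_vec A th v i.
Proof. by elim: i => //= i ->; rewrite scalemxAr. Qed.

Lemma split_vec_conj (A B P : M) th v i : A *m P = P *m B ->
  split_vec A th (P *m v) i = P *m split_vec B th v i.
Proof.
move=> AP; elim: i => //= i ->.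
by rewrite mulmxBl !mulmxA AP -scalar_mxC -!mulmxA -mulmxBr mulmxBl.
Qed.

Section Tridiagonal.
Variables (B : M) (th : nat -> F).
Hypothesis Btri : irr_tridiag B.
Local Notation w := (split_vec B th (delta_mx 0 0)).

Lemma split_vec_tridiag_lower i (j : 'I_d.+1) : (i < j)%N -> w i j 0 = 0.
Proof.
elim: i j => [|i IHi] j ij /=.
  by rewrite mxE; case: eqP => // j0; rewrite j0 in ij.
rewrite mxE big1 // => k _; rewrite !mxE.
have [ik|ki] := ltnP i k; first by rewrite IHi ?mulr0.
rewrite (proj1 (Btri j k)); last by right; apply: leq_ltn_trans ij.
rewrite -val_eqE gtn_eqF ?subrr ?mul0r //; exact: leq_ltn_trans ki (ltnW ij).
Qed.

Lemma split_vec_tridiag_diag (j : 'I_d.+1) : w j j 0 != 0.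
Proof.
case: j => j; elim: j => [|i IHi] hi /=; first by rewrite mxE !eqxx oner_eq0.
rewrite mxE (bigD1 (Ordinal (ltnW hi))) //= big1 ?addr0.
  rewrite !mxE -val_eqE /= gtn_eqF // subr0 mulf_neq0 ?IHi //.
  by apply: (proj2 (Btri _ _)); right.
move=> k; rewrite -val_eqE /= => ki; rewrite !mxE.
have [ik|] := ltnP i k; first by rewrite split_vec_tridiag_lower ?mulr0.
rewrite leq_eqVlt (negPf ki) /= => ki'.
rewrite (proj1 (Btri _ _)); last by right.
by rewrite -val_eqE /= gtn_eqF ?subrr ?mul0r // leqW.
Qed.

Lemma split_mx_tridiag_unit : split_mx B th (delta_mx 0 0) \in unitmx.
Proof.
rewrite -unitmx_tr unitmxE det_trig.
  by rewrite unitfE prodf_seq_neq0; apply/allP => j _; rewrite !mxE split_vec_tridiag_diag.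
by apply/is_trig_mxP => i j ij; rewrite !mxE split_vec_tridiag_lower.
Qed.

End Tridiagonal.

Lemma conj_idem0_mul (P Pi : M) (x : 'cV[F]_d.+1) :
  conj_idem P Pi 0 *m x = (Pi *m x) 0 0 *: (P *m delta_mx 0 0).
Proof.
rewrite /conj_idem (inord_val ord0) -!mulmxA scalemxAr; congr (_ *m _).
apply/matrixP=> a b; rewrite !mxE (bigD1 0) //= big1 ?addr0.
  by rewrite !mxE (ord1 b) eqxx !andbT mulrC.
by move=> c c0; rewrite !mxE (negPf c0) andbF mul0r.
Qed.

Section FirstSplit.
Variables (P Pi A As : M) (th ths phi : nat -> F).
Hypothesis PiP : Pi *m P = 1%:M.
Hypothesis Atri : irr_tridiag (Pi *m A *m P).
Local Notation w := (split_vec (Pi *m A *m P) th (delta_mx 0 0)).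
Hypothesis split_rel : forall i, (i <= d)%N ->
  Pi *m As *m P *m w i = ths i *: w i + (if i is i'.+1 then phi i *: w i' else 0).

Lemma first_split_conj : first_split A As (conj_idem P Pi 0) th ths phi.
Proof.
have PPi := mulmx1C PiP.
have conjP (X : M) : X *m P = P *m (Pi *m X *m P) by rewrite !mulmxA PPi mul1mx.
move=> v v0 [x vE]; subst v; rewrite conj_idem0_mul in v0 *.
set k := (Pi *m x) 0 0 in v0 *.
have k0 : k != 0 by move: v0; rewrite scalemx_eq0 negb_or => /andP[].
have uE i : split_vec A th (k *: (P *m delta_mx 0 0)) i = k *: (P *m w i).
  by rewrite split_vecZ (split_vec_conj _ _ _ (conjP A)).
rewrite /=; split=> [|i i_le].
  have -> : \matrix_(j < d.+1, i < d.+1) split_vec A th (k *: (P *m delta_mx 0 0)) i j ord0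
            = k *: (P *m split_mx (Pi *m A *m P) th (delta_mx 0 0)).
    apply/matrixP=> a b; rewrite mxE uE !mxE; congr (_ * _).
    by apply: eq_bigr => c _; rewrite !mxE.
  rewrite unitmxZ ?unitfE // unitmx_mul split_mx_tridiag_unit // andbT.
  by case: (mulmx1_unit PPi).
rewrite uE -scalemxAr mulmxA (conjP As) -(mulmxA P) split_rel // mulmxDr -scalemxAr scalerDr.
case: i i_le => [|i] _; first by rewrite mulmx0 !scaler0 !scalerA mulrC.
by rewrite uE -scalemxAr !scalerA mulrC (mulrC k).
Qed.

End FirstSplit.

Lemma diagonal_diag_mx (r : 'rV[F]_d.+1) : diagonal (diag_mx r).
Proof. by move=> i j ij; rewrite mxE (negPf ij). Qed.

Lemma leonard_pair_conj (A As P Pi Q Qi : M) :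
  Pi *m P = 1%:M -> Qi *m Q = 1%:M ->
  irr_tridiag (Pi *m A *m P) -> diagonal (Pi *m As *m P) ->
  irr_tridiag (Qi *m As *m Q) -> diagonal (Qi *m A *m Q) ->
  leonard_pair A As.
Proof.
move=> PiP QiQ *; split.
  by exists P; rewrite (invmx_eq PiP); have [] := mulmx1_unit (mulmx1C PiP).
by exists Q; rewrite (invmx_eq QiQ); have [] := mulmx1_unit (mulmx1C QiQ).
Qed.

Lemma leonard_system_conj (A As P Pi Q Qi : M) (th ths : nat -> F) :
  Pi *m P = 1%:M -> Qi *m Q = 1%:M ->
  Qi *m A *m Q = diag_mx (\row_(i < d.+1) th i) ->
  Pi *m As *m P = diag_mx (\row_(i < d.+1) ths i) ->
  irr_tridiag (Pi *m A *m P) -> irr_tridiag (Qi *m As *m Q) ->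
  (forall i j, (i <= d)%N -> (j <= d)%N -> th i = th j -> i = j) ->
  (forall i j, (i <= d)%N -> (j <= d)%N -> ths i = ths j -> i = j) ->
  leonard_system A (conj_idem Q Qi) As (conj_idem P Pi) th ths.
Proof.
move=> PiP QiQ AQ AsP Atri Astri th_inj ths_inj.
split; first exact: prim_idems_conj.
split; first exact: prim_idems_conj.
by split; apply: conj_idem_tridiag.
Qed.

End ConjugatedIdempotents.

Lemma seq3_inj (F : fieldType) (a b c : F) : a != b -> b != c -> a != c ->
  forall i j, (i <= 2)%N -> (j <= 2)%N -> seq3 a b c i = seq3 a b c j -> i = j.
Proof.
move=> ab bc ac [|[|[|i]]] [|[|[|j]]] //= _ _ /eqP;
  by rewrite ?(negPf ab) ?(negPf bc) ?(negPf ac) // eq_sym ?(negPf ab) ?(negPf bc) ?(negPf ac).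
Qed.

Local Ltac mx_entries :=
  apply/matrixP; case=> [[|[|[|?]]] ?] //; case=> [[|[|[|?]]] ?] //;
  rewrite !(mxE, big_ord_recr, big_ord0) /=.

Section Example.
Variables (F : fieldType) (s t z : F).

Definition y1 := t * z + (1 - t ^+ 2) / (s + t).
Definition y2 := - s * z + (1 + s * t) / (s + t).
Definition pairA := mx3 [:: [:: 0; z; 0]; [:: 1; 0; 1 - z]; [:: 0; 1; 0]].
Definition pairAs := mx3 [:: [:: 0; y1; 0]; [:: s; 0; y2]; [:: 0; t; 0]].
Definition eigvAs := mx3 [:: [:: y1; y2; y1]; [:: 1; 0; -1]; [:: t; -s; t]].
Definition eigvAs_inv :=
  mx3 [:: [:: s / 2; 1 / 2; y2 / 2]; [:: t; 0; - y1]; [:: s / 2; -1 / 2; y2 / 2]].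
Definition eigvA := mx3 [:: [:: z; z - 1; z]; [:: 1; 0; -1]; [:: 1; 1; 1]].
Definition eigvA_inv :=
  mx3 [:: [:: 1 / 2; 1 / 2; (1 - z) / 2]; [:: -1; 0; z]; [:: 1 / 2; -1 / 2; (1 - z) / 2]].
Definition b0 := (1 + s * t) / (s + t).
Definition b1 := (1 - s ^+ 2) / (2 * (s + t)).
Definition b2 := (t ^+ 2 - 1) / (s + t).
Definition tridB := mx3 [:: [:: b0; b1; 0]; [:: b2; 0; - b2]; [:: 0; - b1; - b0]].
Definition thetaD : 'M[F]_3 := diag_mx (\row_(i < 3) seq3 1 0 (-1) i).

Local Ltac mx_field := mx_entries; field; by do ?[apply/andP; split].

Lemma eigvAs_invK : 2 != 0 :> F -> s + t != 0 -> eigvAs_inv *m eigvAs = 1%:M.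
Proof. move=> *; rewrite /eigvAs /eigvAs_inv /y1 /y2; mx_field. Qed.

Lemma eigvA_invK : 2 != 0 :> F -> eigvA_inv *m eigvA = 1%:M.
Proof. move=> *; rewrite /eigvA /eigvA_inv; mx_field. Qed.

Lemma conj_eigvAs_A : 2 != 0 :> F -> s + t != 0 -> eigvAs_inv *m pairA *m eigvAs = tridB.
Proof. move=> *; rewrite /eigvAs /eigvAs_inv /pairA /tridB /b0 /b1 /b2 /y1 /y2; mx_field. Qed.

Lemma conj_eigvAs_As : 2 != 0 :> F -> s + t != 0 -> eigvAs_inv *m pairAs *m eigvAs = thetaD.
Proof. move=> *; rewrite /eigvAs /eigvAs_inv /pairAs /thetaD /seq3 /y1 /y2; mx_field. Qed.

Lemma conj_eigvA_A : 2 != 0 :> F -> eigvA_inv *m pairA *m eigvA = thetaD.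
Proof. move=> *; rewrite /eigvA /eigvA_inv /pairA /thetaD /seq3; mx_field. Qed.

Lemma conj_eigvA_As : 2 != 0 :> F -> s + t != 0 -> eigvA_inv *m pairAs *m eigvA = tridB.
Proof. move=> *; rewrite /eigvA /eigvA_inv /pairAs /tridB /b0 /b1 /b2 /y1 /y2; mx_field. Qed.

Lemma tridB_irr : 2 != 0 :> F -> s + t != 0 -> s ^+ 2 != 1 -> t ^+ 2 != 1 ->
  irr_tridiag tridB.
Proof.
move=> two_neq0 st_neq0 s2 t2; have b1_neq0 : b1 != 0.
  by rewrite mulf_neq0 ?invr_eq0 ?mulf_neq0 // subr_eq0 eq_sym.
have b2_neq0 : b2 != 0 by rewrite mulf_neq0 ?invr_eq0 // subr_eq0.
move=> [[|[|[|?]]] ?] [[|[|[|?]]] ?] //; split=> //= ij; rewrite mxE /=;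
  by [case: ij | rewrite ?oppr_eq0].
Qed.

Definition col3 (a b c : F) : 'cV[F]_3 := \col_(i < 3) nth 0 [:: a; b; c] i.

(* e = 1 gives the first split sequence, e = -1 the second one, whose
   eigenvalue sequence of A is reversed. *)
Lemma tridB_split (e : F) (th : nat -> F) : 2 != 0 :> F -> s + t != 0 ->
  e = 1 \/ e = -1 -> th 0%N = e -> th 1%N = 0 ->
  let w := split_vec tridB th (delta_mx 0 0) in
  forall i, (i <= 2)%N ->
  thetaD *m w i = seq3 1 0 (-1) i *: w i +
    (if i is i'.+1 then (s - e) * (t - e) / (s + t) *: w i' else 0).
Proof.
move=> two_neq0 st_neq0 e_pm1 th0 th1 w.
have w1E : w 1%N = col3 (b0 - e) b2 0.
  by rewrite /w /= th0 /tridB; mx_entries; ring.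
have w2E : w 2%N = col3 (b0 * (b0 - e) + b1 * b2) (b2 * (b0 - e)) (- b1 * b2).
  have -> : w 2%N = (tridB - (th 1%N)%:M) *m w 1%N by [].
  by rewrite w1E th1 /tridB; mx_entries; ring.
have phiE : (s - e) * (t - e) / (s + t) = b0 - e.
  by case: e_pm1 => ->; rewrite /b0; field.
move=> [|[|[|i]]] // _; rewrite ?w1E ?w2E ?phiE /w /= /thetaD /seq3; mx_entries;
  rewrite /b0 /b1 /b2; case: e_pm1 => e_val; rewrite ?e_val; field; by do ?[apply/andP; split].
Qed.

End Example.

Theorem proposition4p5 (F : closedFieldType) (s t z : F) :
  (2 \notin [pchar F])%N ->
  s != 0 -> t != 0 -> z != 0 ->
  s ^+ 2 != 1 -> t ^+ 2 != 1 -> s + t != 0 -> z != 1 ->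
  let y1 := t * z + (1 - t ^+ 2) / (s + t) in
  let y2 := - s * z + (1 + s * t) / (s + t) in
  let A := mx3 [:: [:: 0; z; 0]; [:: 1; 0; 1 - z]; [:: 0; 1; 0]] in
  let As := mx3 [:: [:: 0; y1; 0]; [:: s; 0; y2]; [:: 0; t; 0]] in
  leonard_pair A As /\
  parameter_array A As (seq3 1 0 (-1)) (seq3 1 0 (-1))
    (fun _ => (s - 1) * (t - 1) / (s + t))
    (fun _ => (s + 1) * (t + 1) / (s + t)).
Proof.
move=> pchar2 _ _ _ s2 t2 st _ y1 y2 A As.
have two_neq0 : 2 != 0 :> F.
  by apply: contraNneq pchar2 => two0; rewrite inE /= two0 eqxx.
have one_neq_m1 : 1 != -1 :> F by rewrite -subr_eq0 opprK -mulr2n.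
have zero_neq_m1 : 0 != -1 :> F by rewrite eq_sym oppr_eq0 oner_eq0.
have theta_inj := seq3_inj (oner_neq0 F) zero_neq_m1 one_neq_m1.
have Btri := tridB_irr two_neq0 st s2 t2.
split.
  apply: (leonard_pair_conj (eigvAs_invK z two_neq0 st) (eigvA_invK z two_neq0)).
  - by rewrite conj_eigvAs_A.
  - by rewrite conj_eigvAs_As //; apply: diagonal_diag_mx.
  - by rewrite conj_eigvA_As.
  - by rewrite conj_eigvA_A //; apply: diagonal_diag_mx.
exists (conj_idem (eigvA z) (eigvA_inv z)), (conj_idem (eigvAs s t z) (eigvAs_inv s t z)).
split.
  apply: leonard_system_conj => //; rewrite ?eigvAs_invK ?eigvA_invK ?conj_eigvAs_A ?conj_eigvAs_As ?conj_eigvA_A ?conj_eigvA_As //.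
split; apply: first_split_conj; rewrite ?eigvAs_invK ?conj_eigvAs_A ?conj_eigvAs_As //.
- by apply: (tridB_split (e := 1) two_neq0 st (or_introl erefl)).
- have := tridB_split (e := -1) two_neq0 st (or_intror erefl).
  by rewrite !opprK; apply.
Qed.
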